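(* Let $A$ be a T-brace, let $n$ be a natural number and suppose that $a\in\zeta_n(\star,A)\setminus\zeta(\star,A)$. If $a$ has infinite order in $(A,+)$, then $a\star a\neq 0$.
   Context: A (left) brace is a set $A$ with two operations $+$ and $\cdot$ such that $(A,+)$ is an abelian group, $(A,\cdot)$ is a group, and $a(b+c)=ab+ac-a$ for all $a,b,c\in A$. Put $a\star b=ab-a-b$. A subbrace is a subset which is a subgroup of both $(A,+)$ and $(A,\cdot)$; a subbrace $L$ is an ideal if $a\star z, z\star a\in L$ for all $a\in A$, $z\in L$, and then the quotient brace $A/L$ is defined. $A$ is a T-brace if whenever $I$ is an ideal of $J$ and $J$ is an ideal of $A$, then $I$ is an ideal of $A$. The $\star$-center is $\zeta(\star,A)=\{a: a\star x=x\star a=0\ \forall x\}$; the upper $\star$-central series is $\zeta_0(\star,A)=0$, $\zeta_{n+1}(\star,A)/\zeta_n(\star,A)=\zeta(\star,A/\zeta_n(\star,A))$. *)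

From HB Require Import structures.
From mathcomp Require Import all_boot all_algebra.
Set Implicit Arguments. Unset Strict Implicit. Unset Printing Implicit Defensive.
Import GRing.Theory.
Local Open Scope ring_scope.

Definition is_brace (A : zmodType) (mul : A -> A -> A) (inv : A -> A) (one : A) : Prop :=
  [/\ (forall a b c, mul a (mul b c) = mul (mul a b) c),
      (forall a, mul one a = a /\ mul a one = a),
      (forall a, mul (inv a) a = one /\ mul a (inv a) = one)
    & (forall a b c, mul a (b + c) = mul a b + mul a c - a)].

Definition bstar (A : zmodType) (mul : A -> A -> A) (a b : A) : A := mul a b - a - b.

Definition subbrace (A : zmodType) (mul : A -> A -> A) (inv : A -> A) (one : A)
  (S : A -> Prop) : Prop :=
  [/\ S 0, (forall x y, S x -> S y -> S (x - y)),
      S one, (forall x y, S x -> S y -> S (mul x y))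
    & (forall x, S x -> S (inv x))].

Definition ideal_of (A : zmodType) (mul : A -> A -> A) (inv : A -> A) (one : A)
  (J I : A -> Prop) : Prop :=
  [/\ subbrace mul inv one I, (forall z, I z -> J z)
    & (forall a z, J a -> I z -> I (bstar mul a z) /\ I (bstar mul z a))].

Definition ideal (A : zmodType) (mul : A -> A -> A) (inv : A -> A) (one : A)
  (I : A -> Prop) : Prop := ideal_of mul inv one (fun _ => True) I.

Definition T_brace (A : zmodType) (mul : A -> A -> A) (inv : A -> A) (one : A) : Prop :=
  forall I J : A -> Prop, ideal_of mul inv one J I -> ideal mul inv one J ->
    ideal mul inv one I.

(* Upper star-central series, with zeta_(n+1) described as the preimage in A
   of the star-center of A / zeta_n: a + zeta_n is star-central in the quotient
   iff a * x and x * a lie in zeta_n for all x. *)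
Fixpoint zeta (A : zmodType) (mul : A -> A -> A) (n : nat) : A -> Prop :=
  match n with
  | O => fun a => a = 0
  | S m => fun a => forall x, zeta mul m (bstar mul a x) /\ zeta mul m (bstar mul x a)
  end.

From mathcomp Require Import all_boot all_algebra.
Set Implicit Arguments. Unset Strict Implicit.
Import GRing.Theory.
Local Open Scope ring_scope.

(* Suppose a ⋆ a = 0 and a ∈ ζ_{n+1}. Each I_j = ⟨a⟩ + ζ_j is a subbrace, I_j is an
   ideal of I_{j+1} and I_n is an ideal of A, so descending with the T-property the
   cyclic group ⟨a⟩ = I_0 is an ideal of A: x ⋆ a = t a and a ⋆ x = s a for every x.
   Because a ⋆ a = 0, the maps y ↦ y ⋆ x and y ↦ x ⋆ y then act on ⟨a⟩ as
   multiplication by s and t; as they push ζ_{k+1} into ζ_k, s^{n+1} a = t^{n+1} a = 0,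
   and a has infinite order, so s = t = 0, i.e. a ∈ ζ_1. *)

Lemma int_ind_succ_pred (P : int -> Prop) :
  P 0 -> (forall m, P m -> P (m + 1) /\ P (m - 1)) -> forall m, P m.
Proof.
move=> P0 PS; elim/int_rec => [//|n IH|n IH].
- by rewrite -addn1 PoszD; case: (PS _ IH).
- by rewrite -addn1 PoszD opprD; case: (PS _ IH).
Qed.

Lemma infinite_order_mulrz_eq0 (V : zmodType) (a : V) :
  (forall k : nat, (0 < k)%N -> a *+ k <> 0) -> forall m, a *~ m = 0 -> m = 0.
Proof.
move=> a_inf [[|k]|k] // /eqP; first by move/eqP; case/(a_inf k.+1).
by rewrite NegzE mulrNz oppr_eq0 => /eqP; case/(a_inf k.+1).
Qed.

Section Brace.

Variables (A : zmodType) (mul : A -> A -> A) (inv : A -> A) (one : A).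
Hypothesis brace : is_brace mul inv one.

Local Notation "x ∘ y" := (mul x y) (at level 40, left associativity).
Local Notation "x ⋆ y" := (bstar mul x y) (at level 40, left associativity).
Local Notation ζ := (zeta mul).

Lemma mulE u v : u ∘ v = u + v + u ⋆ v.
Proof. by rewrite /bstar addrC !addrA addrAC !addrNK. Qed.

Lemma one_eq0 : one = 0.
Proof.
have [_ mul1 _ mulD] := brace.
have := mulD one 0 0; rewrite addr0 (mul1 0).1 add0r sub0r => /eqP.
by rewrite eq_sym oppr_eq0 => /eqP.
Qed.

Lemma mul0x x : 0 ∘ x = x.
Proof. by rewrite -one_eq0; have [_ mul1 _ _] := brace; exact: (mul1 x).1. Qed.

Lemma mulx0 x : x ∘ 0 = x.
Proof. by rewrite -one_eq0; have [_ mul1 _ _] := brace; exact: (mul1 x).2. Qed.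

Lemma mulVx u : inv u ∘ u = 0.
Proof. by rewrite -one_eq0; have [_ _ mulV _] := brace; exact: (mulV u).1. Qed.

Lemma mulxV u : u ∘ inv u = 0.
Proof. by rewrite -one_eq0; have [_ _ mulV _] := brace; exact: (mulV u).2. Qed.

Lemma star0x x : 0 ⋆ x = 0.
Proof. by rewrite /bstar mul0x subr0 subrr. Qed.

Lemma starx0 x : x ⋆ 0 = 0.
Proof. by rewrite /bstar mulx0 subrr subr0. Qed.

Lemma starD x b c : x ⋆ (b + c) = x ⋆ b + x ⋆ c.
Proof.
have [_ _ _ mulD] := brace.
rewrite /bstar mulD opprD !addrA; congr (_ - _).
by rewrite !(addrAC _ (x ∘ c)); congr (_ + _); exact: addrAC.
Qed.

Lemma starN x b : x ⋆ - b = - (x ⋆ b).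
Proof. by apply/eqP; rewrite -addr_eq0 -starD addNr starx0. Qed.

Lemma starMz x b m : x ⋆ (b *~ m) = (x ⋆ b) *~ m.
Proof.
elim/int_ind_succ_pred: m => [|m IH]; first by rewrite !mulr0z starx0.
by split; rewrite ?mulrzBr ?mulrzDr !mulr1z starD ?starN IH.
Qed.

Lemma starM u v x : (u ∘ v) ⋆ x = u ⋆ (v ⋆ x) + u ⋆ x + v ⋆ x.
Proof.
have [mulA _ _ mulD] := brace.
have vx : v ∘ x = v ⋆ x + x + v by rewrite /bstar !addrNK.
rewrite [LHS]/bstar -mulA vx; move: (v ⋆ x) => w.
rewrite !mulD /bstar [RHS]addrAC subrK (addrAC _ (- u) (- (u ∘ v))) addrK.
by rewrite !addrA (addrAC (u ∘ w)).
Qed.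

Lemma starVl u x : inv u ⋆ x = - (inv u ⋆ (u ⋆ x)) - u ⋆ x.
Proof.
have := starM (inv u) u x; rewrite mulVx star0x => /eqP.
by rewrite eq_sym -addrA addrCA addr_eq0 opprD => /eqP.
Qed.

Lemma invE u : inv u = - u - inv u ⋆ u.
Proof.
have := mulE (inv u) u; rewrite mulVx => /eqP.
by rewrite eq_sym -addrA addr_eq0 opprD => /eqP.
Qed.

Lemma oppE u : - u = inv u + u ⋆ inv u.
Proof.
have := mulE u (inv u); rewrite mulxV => /eqP.
by rewrite eq_sym -addrA addrC addr_eq0 => /eqP ->.
Qed.

Lemma addE u v : u + v = u ∘ (inv u ⋆ v + v).
Proof.
have := starM u (inv u) v; rewrite mulxV star0x => /eqP.
rewrite eq_sym addr_eq0 -starD => /eqP uv.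
by rewrite mulE uv addrA addrAC addrK.
Qed.

Lemma zeta0 k : ζ k 0.
Proof. by elim: k => [|k IH] //= x; rewrite starx0 star0x. Qed.

Lemma zetaW k z : ζ k z -> ζ k.+1 z.
Proof.
elim: k z => [|k IH] z /=; first by move=> -> x; rewrite starx0 star0x.
by move=> zk x; split; apply: IH; case: (zk x).
Qed.

Lemma zeta_starl k z x : ζ k z -> ζ k (z ⋆ x).
Proof. by case: k => [-> | k zk]; [rewrite star0x | apply: zetaW; case: (zk x)]. Qed.

Lemma zeta_starr k z x : ζ k z -> ζ k (x ⋆ z).
Proof. by case: k => [-> | k zk]; [rewrite starx0 | apply: zetaW; case: (zk x)]. Qed.

Section ZetaStep.

Variable k : nat.
Hypothesis zeta_addk : forall u v, ζ k u -> ζ k v -> ζ k (u + v).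
Hypothesis zeta_oppk : forall u, ζ k u -> ζ k (- u).

(* ⋆ is not additive in its left argument; [addE] turns [u + v] into a product. *)
Lemma zeta_starDl_step u v x :
  ζ k (u ⋆ x) -> ζ k ((inv u ⋆ v + v) ⋆ x) -> ζ k ((u + v) ⋆ x).
Proof.
move=> ux cx; rewrite {1}addE starM.
by apply: zeta_addk => //; apply: zeta_addk => //; apply: zeta_starr.
Qed.

Lemma zeta_starVl_step u x : ζ k (u ⋆ x) -> ζ k (inv u ⋆ x).
Proof.
by move=> ux; rewrite starVl; apply: zeta_addk; apply: zeta_oppk => //; apply: zeta_starr.
Qed.

Lemma zetaS_add u v : ζ k.+1 u -> ζ k.+1 v -> ζ k.+1 (u + v).
Proof.
move=> zu zv x; split; last by rewrite starD; apply: zeta_addk; [case: (zu x) | case: (zv x)].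
apply: zeta_starDl_step; first by case: (zu x).
have vu : ζ k (inv u ⋆ v) by case: (zv (inv u)).
rewrite addrC; apply: zeta_starDl_step; first by case: (zv x).
by apply: zeta_starl; apply: zeta_addk => //; apply: zeta_starr.
Qed.

Lemma zetaS_inv u : ζ k.+1 u -> ζ k.+1 (inv u).
Proof.
move=> zu x; split; first by apply: zeta_starVl_step; case: (zu x).
rewrite {1}invE starD !starN; apply: zeta_addk; apply: zeta_oppk; first by case: (zu x).
by apply: zeta_starr; case: (zu (inv u)).
Qed.

Lemma zetaS_opp u : ζ k.+1 u -> ζ k.+1 (- u).
Proof.
move=> zu; rewrite oppE; apply: zetaS_add; first exact: zetaS_inv.
by apply: zetaW; case: (zu (inv u)).
Qed.

End ZetaStep.

Lemma zeta_add_opp k :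
  (forall u v, ζ k u -> ζ k v -> ζ k (u + v)) /\ (forall u, ζ k u -> ζ k (- u)).
Proof.
elim: k => [|k [addk oppk]]; first by split=> [u v -> -> | u ->]; rewrite ?addr0 ?oppr0.
by split; [apply: zetaS_add | apply: zetaS_opp].
Qed.

Lemma zeta_add k u v : ζ k u -> ζ k v -> ζ k (u + v).
Proof. exact: (zeta_add_opp k).1. Qed.

Lemma zeta_opp k u : ζ k u -> ζ k (- u).
Proof. exact: (zeta_add_opp k).2. Qed.

Lemma zeta_sub k u v : ζ k u -> ζ k v -> ζ k (u - v).
Proof. by move=> zu zv; apply/zeta_add/zeta_opp. Qed.

Lemma zeta_mulrz k u m : ζ k u -> ζ k (u *~ m).
Proof.
move=> zu; elim/int_ind_succ_pred: m => [|m IH]; first by rewrite mulr0z; apply: zeta0.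
by rewrite mulrzDr mulrzBr mulr1z; split; [apply: zeta_add | apply: zeta_sub].
Qed.

Lemma zeta_starDl k u v x :
  ζ k (u ⋆ x) -> ζ k ((inv u ⋆ v + v) ⋆ x) -> ζ k ((u + v) ⋆ x).
Proof. by apply: zeta_starDl_step => *; apply: zeta_add. Qed.

Lemma zeta_starVl k u x : ζ k (u ⋆ x) -> ζ k (inv u ⋆ x).
Proof. by apply: zeta_starVl_step => *; [apply: zeta_add | apply: zeta_opp]. Qed.

Section Cyclic.

Variable a : A.
Hypothesis aa : a ⋆ a = 0.

Lemma mulrz_starl x r : a ⋆ (a ⋆ x) = 0 -> (a *~ r) ⋆ x = (a ⋆ x) *~ r.
Proof.
move=> aax.
have Vaa : inv a ⋆ a = 0 by rewrite starVl aa starx0 oppr0 addr0.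
have Va : inv a = - a by rewrite invE Vaa subr0.
have Vaax : inv a ⋆ (a ⋆ x) = 0 by rewrite starVl aax starx0 oppr0 addr0.
elim/int_ind_succ_pred: r => [|r IH]; first by rewrite !mulr0z star0x.
split.
- have -> : a *~ (r + 1) = a ∘ (a *~ r).
    by rewrite mulE starMz aa mul0rz addr0 mulrzDr mulr1z addrC.
  by rewrite starM IH starMz aax mul0rz add0r mulrzDr mulr1z addrC.
- have -> : a *~ (r - 1) = inv a ∘ (a *~ r).
    by rewrite mulE starMz Vaa mul0rz addr0 mulrzBr mulr1z Va addrC.
  by rewrite starM IH starMz Vaax starVl Vaax mul0rz oppr0 add0r sub0r mulrzBr mulr1z addrC.
Qed.

Lemma mulrz_star_self l : (a *~ l) ⋆ a = 0.
Proof. by rewrite mulrz_starl aa ?mul0rz // starx0. Qed.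

Lemma mulrz_star_mulrz l m : (a *~ l) ⋆ (a *~ m) = 0.
Proof. by rewrite starMz mulrz_star_self mul0rz. Qed.

Definition cyc_zeta j (y : A) : Prop := exists m z, ζ j z /\ y = a *~ m + z.

Lemma cyc_zeta_zeta j z : ζ j z -> cyc_zeta j z.
Proof. by exists 0, z; rewrite mulr0z add0r. Qed.

Lemma cyc_zeta_self j : cyc_zeta j a.
Proof. by exists 1, 0; rewrite mulr1z addr0; split; first exact: zeta0. Qed.

Lemma cyc_zeta0P y : cyc_zeta 0 y -> exists m, y = a *~ m.
Proof. by case=> m [z [/= -> ->]]; exists m; rewrite addr0. Qed.

Lemma cyc_zetaW j y : cyc_zeta j y -> cyc_zeta j.+1 y.
Proof. by case=> m [z [zj ->]]; exists m, z; split; first exact: zetaW. Qed.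

Lemma cyc_zeta_add j y w : cyc_zeta j y -> cyc_zeta j w -> cyc_zeta j (y + w).
Proof.
move=> [l [z [zj ->]]] [m [z' [z'j ->]]]; exists (l + m), (z + z').
by rewrite mulrzDr addrACA; split; first exact: zeta_add.
Qed.

Lemma cyc_zeta_opp j y : cyc_zeta j y -> cyc_zeta j (- y).
Proof.
move=> [m [z [zj ->]]]; exists (- m), (- z).
by rewrite mulrNz opprD; split; first exact: zeta_opp.
Qed.

Lemma cyc_zeta_star j y w :
  cyc_zeta j.+1 y -> cyc_zeta j w -> ζ j (y ⋆ w) /\ ζ j (w ⋆ y).
Proof.
move=> [l [z' [z'j1 ->]]] [m [z [zj ->]]]; split.
- rewrite starD starMz; apply: zeta_add; last exact: zeta_starr.
  apply/zeta_mulrz/zeta_starDl; first by rewrite mulrz_star_self; apply: zeta0.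
  by case: (zeta_add (zeta_starr (inv (a *~ l)) z'j1) z'j1 a).
- apply: zeta_starDl; last by apply: zeta_starl; apply: zeta_add => //; apply: zeta_starr.
  by rewrite starD mulrz_star_mulrz add0r; case: (z'j1 (a *~ m)).
Qed.

Lemma cyc_zeta_subbrace j : subbrace mul inv one (cyc_zeta j).
Proof.
have zj := cyc_zeta_zeta (zeta0 j).
split=> [|y w yj wj||y w yj wj|w wj]; rewrite ?one_eq0 //.
- by apply: cyc_zeta_add => //; apply: cyc_zeta_opp.
- rewrite mulE; apply/cyc_zeta_add/cyc_zeta_zeta; first exact: cyc_zeta_add.
  exact: (cyc_zeta_star (cyc_zetaW yj) wj).1.
- rewrite invE; apply/cyc_zeta_add/cyc_zeta_opp/cyc_zeta_zeta/zeta_starVl.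
    exact: cyc_zeta_opp.
  exact: (cyc_zeta_star (cyc_zetaW wj) wj).1.
Qed.

Lemma cyc_zeta_ideal_of j : ideal_of mul inv one (cyc_zeta j.+1) (cyc_zeta j).
Proof.
split; [exact: cyc_zeta_subbrace | exact: cyc_zetaW |].
by move=> y w yj1 wj; have [yw wy] := cyc_zeta_star yj1 wj; split; apply: cyc_zeta_zeta.
Qed.

Lemma cyc_zeta_ideal_top n : ζ n.+1 a -> ideal mul inv one (cyc_zeta n).
Proof.
move=> an1; split; [exact: cyc_zeta_subbrace | by [] |].
move=> x _ _ [m [z [zn ->]]].
have zw : ζ n.+1 (a *~ m + z) by apply: zeta_add; [exact: zeta_mulrz | exact: zetaW].
by have [wx xw] := zw x; split; apply: cyc_zeta_zeta.
Qed.

Lemma cyc_zeta_ideal j n :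
  T_brace mul inv one -> ζ (j + n).+1 a -> ideal mul inv one (cyc_zeta j).
Proof.
move=> Tbrace; elim: n j => [|n IH] j ajn.
  by rewrite addn0 in ajn; apply: cyc_zeta_ideal_top.
by apply: (Tbrace _ (cyc_zeta j.+1) (cyc_zeta_ideal_of j)); apply: IH; rewrite addSnnS.
Qed.

End Cyclic.

Lemma lowering_scalar_eq0 (f : A -> A) a t k :
  (forall i b, ζ i.+1 b -> ζ i (f b)) -> (forall r, f (a *~ r) = a *~ t *~ r) ->
  ζ k a -> (forall i : nat, (0 < i)%N -> a *+ i <> 0) -> f a = 0.
Proof.
move=> lower f_a ak a_inf.
have pow_eq0 i r : ζ i (a *~ r) -> a *~ (t ^+ i * r) = 0.
  elim: i r => [|i IH] r ar; first by rewrite mul1r.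
  by rewrite exprSr -mulrA; apply: IH; rewrite mulrzA -f_a; apply: lower.
have /(infinite_order_mulrz_eq0 a_inf)/eqP : a *~ (t ^+ k * 1) = 0.
  by apply: pow_eq0; rewrite mulr1z.
by rewrite mulr1 expf_eq0 => /andP[_ /eqP t0]; have := f_a 1; rewrite !mulr1z t0 mulr0z.
Qed.

End Brace.

Theorem lemma3p2 (A : zmodType) (mul : A -> A -> A) (inv : A -> A) (one : A)
  (HA : is_brace mul inv one) (HT : T_brace mul inv one) (n : nat) (a : A) :
  zeta mul n a -> ~ zeta mul 1 a ->
  (forall k : nat, (0 < k)%N -> a *+ k <> 0) ->
  bstar mul a a <> 0.
Proof.
move=> an a_notin1 a_inf aa.
case: n an => [|n] an; first by apply: (a_inf 1%N) => //; rewrite mulr1n.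
have [_ _ cyc_ideal] := cyc_zeta_ideal (j := 0) HA aa HT an.
apply: a_notin1 => x.
have [[t xa] [s ax]] : (exists t, bstar mul x a = a *~ t) /\ exists s, bstar mul a x = a *~ s.
  by have [/cyc_zeta0P ? /cyc_zeta0P ?] := cyc_ideal x a I (cyc_zeta_self HA a 0).
split.
- apply: (lowering_scalar_eq0 (f := fun y => bstar mul y x) (t := s) _ _ an a_inf).
    by move=> k b bk; exact: (bk x).1.
  by move=> r; rewrite (mulrz_starl HA aa) ax // (starMz HA) aa mul0rz.
- apply: (lowering_scalar_eq0 (f := bstar mul x) (t := t) _ _ an a_inf).
    by move=> k b bk; exact: (bk x).2.
  by move=> r; rewrite (starMz HA) xa.
Qed.
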